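(* Let $n\ge2$ and $\mu\in[0,1-\frac1n]$. Every optimal solution $P=(p_{ij})$ of problem (P) is TP2, i.e. $p_{ij}\,p_{i'j'}\ge p_{ij'}\,p_{i'j}$ for all $1\le i<i'\le n$ and $1\le j<j'\le n$ (equivalently, the associated step density $f(x,y)=n^2p_{ij}$ on $((i-1)/n,i/n)\times((j-1)/n,j/n)$ satisfies $f(x,y)f(x',y')\ge f(x,y')f(x',y)$ whenever $x<x'$, $y<y'$).
   Context: An $n\times n$ checkerboard copula is a real $n\times n$ matrix $P=(p_{ij})$ with nonnegative entries whose row and column sums all equal $\frac1n$. $\Xi=(\xi_{ij})$ with $\xi_{ij}=1$ if $i=j$, $2$ if $i>j$, $0$ if $i<j$. Problem (P): minimize $I(P)=\sum_{i,j}p_{ij}\log p_{ij}$ (with $0\log0=0$) over $n\times n$ checkerboard copulas $P$ with $1-\mathrm{tr}(\Xi P\Xi P^\top)=\mu$. An optimal solution of (P) is called a MICK (minimum information checkerboard copula under fixed Kendall's $\tau$). *)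

From mathcomp Require Import all_boot all_order all_algebra.
From mathcomp Require Import all_classical all_reals all_analysis.
Set Implicit Arguments. Unset Strict Implicit. Unset Printing Implicit Defensive.
Import Order.TTheory GRing.Theory Num.Theory.
Local Open Scope ring_scope.

(* Convention: indices are 0-based ('I_n), i.e. the paper's index i is our i+1. *)

Definition xlogx {R : realType} (x : R) : R := if x == 0 then 0 else x * ln x.

Definition checkerboard_copula {R : realType} (n : nat) (P : 'M[R]_n) : Prop :=
  (forall i j, 0 <= P i j) /\
  (forall i, \sum_(j < n) P i j = n%:R^-1) /\
  (forall j, \sum_(i < n) P i j = n%:R^-1).

Definition Xi {R : realType} (n : nat) : 'M[R]_n :=
  \matrix_(i < n, j < n) (if i == j then 1 else if (j < i)%N then 2 else 0).

Definition ktau {R : realType} (n : nat) (P : 'M[R]_n) : R :=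
  1 - \tr (Xi n *m P *m Xi n *m P^T).

Definition Ient {R : realType} (n : nat) (P : 'M[R]_n) : R :=
  \sum_(i < n) \sum_(j < n) xlogx (P i j).

Definition feasible {R : realType} (n : nat) (mu : R) (P : 'M[R]_n) : Prop :=
  checkerboard_copula P /\ ktau P = mu.

Definition MICK {R : realType} (n : nat) (mu : R) (P : 'M[R]_n) : Prop :=
  feasible mu P /\ forall Q : 'M[R]_n, feasible mu Q -> Ient P <= Ient Q.

Definition TP2 {R : realType} (n : nat) (P : 'M[R]_n) : Prop :=
  forall (i i' j j' : 'I_n), (i < i')%N -> (j < j')%N ->
    P i j * P i' j' >= P i j' * P i' j.

From mathcomp Require Import all_boot all_order all_algebra.
From mathcomp Require Import all_classical all_reals all_analysis.
From mathcomp Require Import lra ring zify.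
Import Order.TTheory GRing.Theory Num.Theory.
Import numFieldNormedType.Exports.
Local Open Scope ring_scope.

(* If an optimal P violated TP2 on rows i < i' and columns j < j', moving a
   mass t from the anti-diagonal to the diagonal of that 2x2 block (adding
   t times the swap matrix) would keep P a checkerboard copula and strictly
   lower its entropy, for the t at which the cross-ratio of the block becomes
   1.  It would not lower Kendall's tau: since the rows of Xi are nonincreasing
   and its columns nondecreasing, tr(Xi X Xi Y^T) <= 0 whenever one of X, Y is
   a swap matrix and the other is nonnegative.  Interpolating from there towards the
   independence copula, whose tau is 0 and whose entropy is minimal, the
   intermediate value theorem brings tau back to mu, and by convexity the
   entropy does not increase. *)

Section XlogX.
Variable R : realType.
Implicit Types x y z s : R.

Lemma xlogxE x : xlogx x = x * ln x.
Proof. by rewrite /xlogx; case: eqP => [->|]; rewrite ?mul0r. Qed.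

Lemma ln_lt_subr1 z : 0 < z -> z != 1 -> ln z < z - 1.
Proof.
move=> z0 z1; have : ln z != 0 by rewrite ln_eq0.
by move/expR_gt1Dx; rewrite lnK ?posrE //; lra.
Qed.

Lemma xlogx_tangent_lt x y : 0 <= x -> 0 < y -> x != y ->
  xlogx y + (x - y) * (ln y + 1) < xlogx x.
Proof.
move=> x0 y0 xy; rewrite !xlogxE.
have [->|xn0] := eqVneq x 0; first by rewrite mul0r; nra.
have xp : 0 < x by rewrite lt_neqAle eq_sym xn0.
have yx1 : y / x != 1 by rewrite -[1](divff xn0) (inj_eq (mulIf _)) ?invr_eq0 // eq_sym.
have := @ln_lt_subr1 (y / x) (divr_gt0 y0 xp) yx1.
rewrite ln_div ?posrE // -(ltr_pM2l xp) mulrBr mulrDr mulrN1 mulrCA divff // mulr1.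
lra.
Qed.

Lemma xlogx_tangent_le x y : 0 <= x -> 0 < y ->
  xlogx y + (x - y) * (ln y + 1) <= xlogx x.
Proof.
move=> x0 y0; have [->|xy] := eqVneq x y; first by rewrite subrr mul0r addr0.
exact/ltW/xlogx_tangent_lt.
Qed.

Lemma xlogx_convex x y s : 0 <= x -> 0 <= y -> 0 <= s <= 1 ->
  xlogx ((1 - s) * x + s * y) <= (1 - s) * xlogx x + s * xlogx y.
Proof.
move=> x0 y0 /andP[s0 s1]; set z := (1 - s) * x + s * y.
have z0 : 0 <= z by rewrite /z; nra.
have [z_eq0|zn0] := eqVneq z 0.
  have sx : (1 - s) * x = 0 by rewrite /z in z_eq0; nra.
  have sy : s * y = 0 by rewrite /z in z_eq0; nra.
  by rewrite z_eq0 !xlogxE !mulrA sx sy !mul0r addr0.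
have zp : 0 < z by rewrite lt_neqAle eq_sym zn0.
have hx := @xlogx_tangent_le x z x0 zp; have hy := @xlogx_tangent_le y z y0 zp.
have e : (1 - s) * (x - z) + s * (y - z) = 0 by rewrite /z; ring.
set L := ln z + 1 in hx hy.
have : (1 - s) * (xlogx z + (x - z) * L) + s * (xlogx z + (y - z) * L)
       <= (1 - s) * xlogx x + s * xlogx y.
  by apply: lerD; apply: ler_wpM2l; rewrite ?subr_ge0.
have -> : (1 - s) * (xlogx z + (x - z) * L) + s * (xlogx z + (y - z) * L)
          = xlogx z + ((1 - s) * (x - z) + s * (y - z)) * L by ring.
by rewrite e mul0r addr0.
Qed.

(* The balance condition says that the derivative in [t] of the left-hand side
   vanishes, so the tangent inequalities at the new point add up exactly. *)
Lemma xlogx_exchange_lt (a b c d t : R) :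
  0 <= a -> 0 <= d -> 0 < t -> t < b -> t < c ->
  (a + t) * (d + t) = (b - t) * (c - t) ->
  xlogx (a + t) + xlogx (b - t) + xlogx (c - t) + xlogx (d + t)
    < xlogx a + xlogx b + xlogx c + xlogx d.
Proof.
move=> a0 d0 t0 tb tc balanced.
have at0 : 0 < a + t by lra.
have dt0 : 0 < d + t by lra.
have bt0 : 0 < b - t by lra.
have ct0 : 0 < c - t by lra.
have b_neq : b != b - t by rewrite gt_eqF //; lra.
have ha := @xlogx_tangent_le a _ a0 at0.
have hd := @xlogx_tangent_le d _ d0 dt0.
have hb := @xlogx_tangent_lt b _ (ltW (lt_trans t0 tb)) bt0 b_neq.
have hc := @xlogx_tangent_le c _ (ltW (lt_trans t0 tc)) ct0.
have : t * (ln (a + t) + ln (d + t)) = t * (ln (b - t) + ln (c - t)).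
  by rewrite -!lnM ?posrE // balanced.
lra.
Qed.
End XlogX.

Lemma exchange_balance {F : realFieldType} {a b c d : F} :
  0 <= a -> 0 <= b -> 0 <= c -> 0 <= d -> a * d < b * c ->
  exists2 t, 0 < t & [/\ t < b, t < c & (a + t) * (d + t) = (b - t) * (c - t)].
Proof.
move=> a0 b0 c0 d0 adbc.
have b_gt0 : 0 < b by rewrite lt_def b0 andbT; apply: contraTneq adbc => ->; nra.
have c_gt0 : 0 < c by rewrite lt_def c0 andbT; apply: contraTneq adbc => ->; nra.
set S := a + b + c + d; have S_gt0 : 0 < S by rewrite /S; lra.
exists ((b * c - a * d) / S); first by rewrite divr_gt0 // subr_gt0.
set t := _ / S; have tS : t * S = b * c - a * d by rewrite divfK ?gt_eqF.
split.
- by rewrite -(ltr_pM2r S_gt0) tS /S; nra.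
- by rewrite -(ltr_pM2r S_gt0) tS /S; nra.
- have -> : (a + t) * (d + t) = (b - t) * (c - t) + (t * S - (b * c - a * d)).
    by rewrite /S; ring.
  by rewrite tS subrr addr0.
Qed.

Lemma sum_supported2 {V : nmodType} {I : finType} {F : I -> V} {i i' : I} :
  i != i' -> (forall a, a != i -> a != i' -> F a = 0) -> \sum_a F a = F i + F i'.
Proof.
move=> ii' F0; rewrite (bigD1 i) // (bigD1 i') 1?eq_sym //= big1 ?addr0 //.
by move=> a /andP[ai' ai]; apply: F0.
Qed.

Lemma sum_eq_natr (R : pzSemiRingType) (I : finType) (i : I) :
  \sum_(a : I) (a == i)%:R = 1 :> R.
Proof. by rewrite (bigD1 i) //= eqxx big1 ?addr0 // => a /negbTE ->. Qed.

Lemma mxtrace_mul_trmx (R : pzSemiRingType) m p (A B : 'M[R]_(m, p)) :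
  \tr (A *m B^T) = \sum_a \sum_b A a b * B a b.
Proof. by apply: eq_bigr => a _; rewrite mxE; apply: eq_bigr => b _; rewrite mxE. Qed.

Section SwapMatrix.
Variables (R : pzRingType) (m p : nat).

Definition swap_mx (i i' : 'I_m) (j j' : 'I_p) : 'M[R]_(m, p) :=
  (delta_mx i 0 - delta_mx i' 0 : 'cV_m) *m (delta_mx 0 j - delta_mx 0 j').

Variables (i i' : 'I_m) (j j' : 'I_p).
Local Notation S := (swap_mx i i' j j').

Lemma swap_mxE a b :
  S a b = ((a == i)%:R - (a == i')%:R) * ((b == j)%:R - (b == j')%:R).
Proof. by rewrite mxE big_ord1 !mxE !eqxx !andbT. Qed.

Lemma mul_swap_mxE q r (A : 'M[R]_(q, m)) (B : 'M[R]_(p, r)) a b :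
  (A *m S *m B) a b = (A a i - A a i') * (B j b - B j' b).
Proof.
rewrite mulmxA -mulmxA [A *m _]mulmxBr [_ *m B]mulmxBl -!colE -!rowE.
by rewrite mxE big_ord1 !mxE.
Qed.

Lemma swap_mx_row_sum a : \sum_b S a b = 0.
Proof.
under eq_bigr do rewrite swap_mxE.
by rewrite -mulr_sumr sumrB !sum_eq_natr subrr mulr0.
Qed.

Lemma swap_mx_col_sum b : \sum_a S a b = 0.
Proof.
under eq_bigr do rewrite swap_mxE.
by rewrite -mulr_suml sumrB !sum_eq_natr subrr mul0r.
Qed.

Lemma swap_mx_row_out a b : a != i -> a != i' -> S a b = 0.
Proof. by move=> /negbTE ai /negbTE ai'; rewrite swap_mxE ai ai' subrr mul0r. Qed.

Lemma swap_mx_col_out a b : b != j -> b != j' -> S a b = 0.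
Proof. by move=> /negbTE bj /negbTE bj'; rewrite swap_mxE bj bj' subrr mulr0. Qed.

Lemma swap_mx_corners : i != i' -> j != j' ->
  [/\ S i j = 1, S i j' = -1, S i' j = -1 & S i' j' = 1].
Proof.
move=> ii' jj'; rewrite !swap_mxE !eqxx !(negbTE ii', negbTE jj').
rewrite ![i' == i]eq_sym ![j' == j]eq_sym !(negbTE ii', negbTE jj').
by rewrite subr0 sub0r mulr1 mul1r mulrN1 mulN1r opprK.
Qed.

End SwapMatrix.

Arguments swap_mx {R m p}.
Arguments swap_mx_row_out {R m p i i' j j' a b}.
Arguments swap_mx_col_out {R m p i i' j j' a b}.
Arguments swap_mx_corners {R m p i i' j j'}.

Lemma add_swap_mx_ge0 (R : numDomainType) m p (P : 'M[R]_(m, p)) t i i' j j' :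
  i != i' -> j != j' -> (forall a b, 0 <= P a b) -> 0 <= t ->
  t <= P i j' -> t <= P i' j -> forall a b, 0 <= (P + t *: swap_mx i i' j j') a b.
Proof.
move=> ii' jj' P0 t0 tij' ti'j a b; rewrite 2!mxE.
have [Sij Sij' Si'j Si'j'] := swap_mx_corners (R := R) ii' jj'.
case: (eqVneq a i) => [-> | ai].
  case: (eqVneq b j) => [-> | bj]; first by rewrite Sij mulr1 addr_ge0.
  case: (eqVneq b j') => [-> | bj']; first by rewrite Sij' mulrN1 subr_ge0.
  by rewrite swap_mx_col_out // mulr0 addr0.
case: (eqVneq a i') => [-> | ai']; last by rewrite swap_mx_row_out // mulr0 addr0.
case: (eqVneq b j) => [-> | bj]; first by rewrite Si'j mulrN1 subr_ge0.
case: (eqVneq b j') => [-> | bj']; first by rewrite Si'j' mulr1 addr_ge0.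
by rewrite swap_mx_col_out // mulr0 addr0.
Qed.

Section CheckerboardCopula.
Variables (R : realType) (n : nat).
Local Notation XI := (@Xi R n).
Implicit Types (X Y P Q : 'M[R]_n) (a b k : 'I_n) (c s t : R).

Lemma XiE a b : XI a b = ((b < a)%N + (b <= a)%N)%:R.
Proof.
rewrite mxE; case: ltngtP => [ab|ba|/val_inj ->]; last by rewrite eqxx.
- by rewrite -val_eqE /= gtn_eqF.
- by rewrite -val_eqE /= ltn_eqF.
Qed.

Lemma Xi_row_nonincreasing a k (k' : 'I_n) : (k <= k')%N -> XI a k' <= XI a k.
Proof. by move=> kk; rewrite !XiE ler_nat; lia. Qed.

Lemma Xi_col_nondecreasing b k (k' : 'I_n) : (k <= k')%N -> XI k b <= XI k' b.
Proof. by move=> kk; rewrite !XiE ler_nat; lia. Qed.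

Lemma Xi_add_transpose a b : XI a b + XI b a = 2.
Proof. by rewrite !XiE -natrD; congr (_%:R); lia. Qed.

Lemma sum_Xi : \sum_a \sum_b XI a b = n%:R ^+ 2.
Proof.
apply: (@mulfI _ 2); first by rewrite pnatr_eq0.
have -> : 2 * \sum_a \sum_b XI a b = \sum_a \sum_b (XI a b + XI b a).
  rewrite mulr_natl mulr2n {2}exchange_big -big_split /=.
  by under eq_bigr do rewrite -big_split.
under eq_bigr do under eq_bigr do rewrite Xi_add_transpose.
by rewrite !sumr_const card_ord -mulrnA expr2 -natrM mulr_natr.
Qed.

Definition kform X Y := \tr (XI *m X *m XI *m Y^T).

Lemma ktauE X : ktau X = 1 - kform X X.
Proof. by []. Qed.

Lemma kformDl X1 X2 Y : kform (X1 + X2) Y = kform X1 Y + kform X2 Y.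
Proof. by rewrite /kform mulmxDr !mulmxDl mxtraceD. Qed.

Lemma kformZl c X Y : kform (c *: X) Y = c * kform X Y.
Proof. by rewrite /kform -scalemxAr -!scalemxAl mxtraceZ. Qed.

Lemma kformDr X Y1 Y2 : kform X (Y1 + Y2) = kform X Y1 + kform X Y2.
Proof. by rewrite /kform linearD /= mulmxDr mxtraceD. Qed.

Lemma kformZr c X Y : kform X (c *: Y) = c * kform X Y.
Proof. by rewrite /kform linearZ /= -scalemxAr mxtraceZ. Qed.

Lemma kformE X Y : kform X Y = \sum_a \sum_b (XI *m X *m XI) a b * Y a b.
Proof. exact: mxtrace_mul_trmx. Qed.

Lemma kformEr X Y : kform X Y = \sum_a \sum_b X a b * (XI^T *m Y *m XI^T) a b.
Proof.
by rewrite -mxtrace_mul_trmx !trmx_mul !trmxK /kform -!mulmxA mxtrace_mulC !mulmxA.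
Qed.

Section SwapSign.
Variables (i i' j j' : 'I_n).
Hypotheses (le_ii' : (i <= i')%N) (le_jj' : (j <= j')%N).
Local Notation S := (swap_mx i i' j j').

Lemma kform_swap_mxl_le0 Y : (forall a b, 0 <= Y a b) -> kform S Y <= 0.
Proof.
move=> Y0; rewrite kformE; apply: sumr_le0 => a _; apply: sumr_le0 => b _.
rewrite mul_swap_mxE; apply: mulr_le0_ge0 (Y0 a b); apply: mulr_ge0_le0.
  by rewrite subr_ge0 Xi_row_nonincreasing.
by rewrite subr_le0 Xi_col_nondecreasing.
Qed.

Lemma kform_swap_mxr_le0 Y : (forall a b, 0 <= Y a b) -> kform Y S <= 0.
Proof.
move=> Y0; rewrite kformEr; apply: sumr_le0 => a _; apply: sumr_le0 => b _.
rewrite mul_swap_mxE ![XI^T _ _]mxE.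
apply: mulr_ge0_le0 (Y0 a b) _; apply: mulr_le0_ge0.
  by rewrite subr_le0 Xi_col_nondecreasing.
by rewrite subr_ge0 Xi_row_nonincreasing.
Qed.

Lemma ktau_le_add_swap_mx P t : 0 <= t ->
  (forall a b, 0 <= P a b) -> (forall a b, 0 <= (P + t *: S) a b) ->
  ktau P <= ktau (P + t *: S).
Proof.
move=> t0 P0 Q0; rewrite !ktauE lerD2l lerN2.
rewrite [in leLHS]kformDl kformZl kformDr kformZr -addrA gerDl.
rewrite -mulrDr mulr_ge0_le0 // -[0]addr0.
by rewrite lerD ?kform_swap_mxr_le0 ?kform_swap_mxl_le0.
Qed.

End SwapSign.

Definition indep_copula : 'M[R]_n := const_mx (n%:R ^+ 2)^-1.

Lemma ktau_indep_copula : (0 < n)%N -> ktau indep_copula = 0.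
Proof.
move=> n_gt0; set c := (n%:R ^+ 2)^-1 : R.
pose r a := \sum_k XI a k; pose s b := \sum_k XI k b.
have entry a b : (XI *m indep_copula *m XI) a b = c * r a * s b.
  rewrite mxE /s mulr_sumr; apply: eq_bigr => k _.
  rewrite mxE; under eq_bigr do rewrite [indep_copula _ _]mxE.
  by rewrite -mulr_suml [_ * c]mulrC.
rewrite ktauE kformE.
have -> : \sum_a \sum_b (XI *m indep_copula *m XI) a b * indep_copula a b
          = c ^+ 2 * ((\sum_a r a) * (\sum_b s b)).
  rewrite mulr_suml mulr_sumr; apply: eq_bigr => a _.
  rewrite !mulr_sumr; apply: eq_bigr => b _.
  by rewrite entry mxE -/c; ring.
have n0 : n%:R != 0 :> R by rewrite pnatr_eq0 -lt0n.
by rewrite /r /s /= sum_Xi exchange_big sum_Xi /c; field.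
Qed.

Lemma checkerboard_copula_mass P : (0 < n)%N -> checkerboard_copula P ->
  \sum_a \sum_b P a b = 1.
Proof.
move=> n_gt0 [_ [rows _]]; under eq_bigr do rewrite rows.
by rewrite sumr_const card_ord -[_ *+ n]mulr_natr mulVf // pnatr_eq0 -lt0n.
Qed.

Lemma indep_copula_checkerboard : (0 < n)%N -> checkerboard_copula indep_copula.
Proof.
move=> n_gt0; have n0 : n%:R != 0 :> R by rewrite pnatr_eq0 -lt0n.
have margin : \sum_(k < n) (n%:R ^+ 2)^-1 = n%:R^-1 :> R.
  by rewrite sumr_const card_ord -mulr_natr; field.
split; first by move=> a b; rewrite mxE invr_ge0 exprn_ge0 ?ler0n.
by split=> [a|b]; rewrite -margin; apply: eq_bigr => k _; rewrite mxE.
Qed.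

Lemma checkerboard_copula_lerp P Q s :
  checkerboard_copula P -> checkerboard_copula Q -> 0 <= s <= 1 ->
  checkerboard_copula ((1 - s) *: P + s *: Q).
Proof.
move=> [P0 [Prow Pcol]] [Q0 [Qrow Qcol]] /andP[s0 s1].
split; first by move=> a b; rewrite !mxE addr_ge0 ?mulr_ge0 ?subr_ge0.
split=> [a|b]; under eq_bigr do rewrite !mxE.
  by rewrite big_split /= -!mulr_sumr Prow Qrow; ring.
by rewrite big_split /= -!mulr_sumr Pcol Qcol; ring.
Qed.

Lemma checkerboard_copula_add_swap_mx P t i i' j j' : checkerboard_copula P ->
  (forall a b, 0 <= (P + t *: swap_mx i i' j j') a b) ->
  checkerboard_copula (P + t *: swap_mx i i' j j').
Proof.
move=> [_ [Prow Pcol]] Q0; split=> //.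
split=> [a|b]; under eq_bigr do rewrite 2!mxE.
  by rewrite big_split /= -mulr_sumr swap_mx_row_sum mulr0 addr0.
by rewrite big_split /= -mulr_sumr swap_mx_col_sum mulr0 addr0.
Qed.

Lemma Ient_convex P Q s :
  (forall a b, 0 <= P a b) -> (forall a b, 0 <= Q a b) -> 0 <= s <= 1 ->
  Ient ((1 - s) *: P + s *: Q) <= (1 - s) * Ient P + s * Ient Q.
Proof.
move=> P0 Q0 s01; rewrite /Ient !mulr_sumr -big_split /=; apply: ler_sum => a _.
rewrite !mulr_sumr -big_split /=; apply: ler_sum => b _.
by rewrite !mxE xlogx_convex.
Qed.

Lemma Ient_indep_copula_le Q : (0 < n)%N -> checkerboard_copula Q ->
  Ient indep_copula <= Ient Q.
Proof.
move=> n_gt0 Qc; set c := (n%:R ^+ 2)^-1 : R.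
have c_gt0 : 0 < c by rewrite invr_gt0 exprn_gt0 // ltr0n.
have mass_diff : \sum_a \sum_b (Q a b - indep_copula a b) = 0.
  under eq_bigr do rewrite sumrB.
  rewrite sumrB !checkerboard_copula_mass ?subrr //.
  exact: indep_copula_checkerboard.
rewrite -[leLHS]addr0 -(mul0r (ln c + 1)) -mass_diff /Ient mulr_suml -big_split.
apply: ler_sum => a _; rewrite mulr_suml -big_split; apply: ler_sum => b _.
by rewrite [indep_copula a b]mxE xlogx_tangent_le //; case: Qc.
Qed.

Lemma Ient_add_swap_mx P t i i' j j' : i != i' -> j != j' ->
  Ient (P + t *: swap_mx i i' j j') - Ient P =
    xlogx (P i j + t) + xlogx (P i j' - t) + xlogx (P i' j - t) + xlogx (P i' j' + t)
    - (xlogx (P i j) + xlogx (P i j') + xlogx (P i' j) + xlogx (P i' j')).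
Proof.
move=> ii' jj'; have [Sij Sij' Si'j Si'j'] := swap_mx_corners (R := R) ii' jj'.
set S := swap_mx i i' j j' in Sij Sij' Si'j Si'j' *.
pose G a b := xlogx ((P + t *: S) a b) - xlogx (P a b).
have G0 a b : S a b = 0 -> G a b = 0.
  by move=> S0; rewrite /G 2!mxE S0 mulr0 addr0 subrr.
transitivity (\sum_a \sum_b G a b).
  by rewrite /Ient -sumrB; apply: eq_bigr => a _; rewrite -sumrB.
rewrite (sum_supported2 ii') => [|a ai ai']; last first.
  by apply: big1 => b _; apply/G0/swap_mx_row_out.
rewrite !(sum_supported2 jj') => [|b bj bj'|b bj bj']; last 2 first.
- exact/G0/swap_mx_col_out.
- exact/G0/swap_mx_col_out.
rewrite /G ![(P + _) _ _]mxE ![(t *: S) _ _]mxE Sij Sij' Si'j Si'j' !mulr1 !mulrN1.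
ring.
Qed.

Lemma copula_non_TP2_improvable P (i i' j j' : 'I_n) :
  checkerboard_copula P -> (i < i')%N -> (j < j')%N ->
  P i j * P i' j' < P i j' * P i' j ->
  exists Q, [/\ checkerboard_copula Q, ktau P <= ktau Q & Ient Q < Ient P].
Proof.
move=> Pc lt_ii' lt_jj' non_TP2; have [P0 _] := Pc.
have ii' : i != i' by apply: contraTneq lt_ii' => ->; rewrite ltnn.
have jj' : j != j' by apply: contraTneq lt_jj' => ->; rewrite ltnn.
have [t t_gt0 [t_lt_ij' t_lt_i'j balanced]] :=
  exchange_balance (P0 i j) (P0 i j') (P0 i' j) (P0 i' j') non_TP2.
have Q0 : forall a b, 0 <= (P + t *: swap_mx i i' j j') a b.
  by apply: add_swap_mx_ge0 => //; apply: ltW.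
exists (P + t *: swap_mx i i' j j'); split.
- exact: checkerboard_copula_add_swap_mx.
- by apply: ktau_le_add_swap_mx (ltW t_gt0) P0 Q0; apply: ltnW.
- by rewrite -subr_lt0 Ient_add_swap_mx // subr_lt0 xlogx_exchange_lt.
Qed.

Lemma ktau_lerp_continuous X Y : continuous (fun s => ktau ((1 - s) *: X + s *: Y)).
Proof.
pose q : {poly R} := 1 - (kform X X *: (1 - 'X) ^+ 2
  + (kform X Y + kform Y X) *: ((1 - 'X) * 'X) + kform Y Y *: 'X ^+ 2).
suff -> : (fun s => ktau ((1 - s) *: X + s *: Y)) = horner q.
  exact: continuous_horner.
apply/funext => s; rewrite ktauE !(kformDl, kformDr, kformZl, kformZr) !hornerE /=.
ring.
Qed.

Lemma feasible_Ient_le_of_ktau_ge Q mu : (0 < n)%N -> checkerboard_copula Q ->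
  0 <= mu <= ktau Q -> exists2 Q' : 'M[R]_n, feasible mu Q' & Ient Q' <= Ient Q.
Proof.
move=> n_gt0 Qc /andP[mu0 muQ]; have Pic := indep_copula_checkerboard n_gt0.
pose f s := ktau ((1 - s) *: Q + s *: indep_copula).
have [s] : exists2 s, s \in `[0, 1] & f s = mu.
  apply: IVT; [exact: ler01 | exact/continuous_subspaceT/ktau_lerp_continuous |].
  rewrite /f subr0 subrr scale1r !scale0r addr0 add0r scale1r ktau_indep_copula //.
  by rewrite ge_min le_max mu0 muQ !orbT.
rewrite in_itv /= => /andP[s0 s1] fs.
exists ((1 - s) *: Q + s *: indep_copula).
  by split=> //; apply: checkerboard_copula_lerp; rewrite ?s0.
apply: le_trans (Ient_convex _ _ _ (proj1 Qc) (proj1 Pic) _) _; first by rewrite s0.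
have := Ient_indep_copula_le Q n_gt0 Qc; nra.
Qed.

End CheckerboardCopula.

Arguments copula_non_TP2_improvable {R n P i i' j j'}.
Arguments feasible_Ient_le_of_ktau_ge {R n Q mu}.

Theorem proposition3 (R : realType) (n : nat) (mu : R) :
  (2 <= n)%N -> 0 <= mu -> mu <= 1 - n%:R^-1 ->
  forall P : 'M[R]_n, MICK mu P -> TP2 P.
Proof.
(* The upper bound on [mu] only ensures that (P) is feasible. *)
move=> n_ge2 mu0 _ P [[Pc tauP] Pmin] i i' j j' lt_ii' lt_jj'.
rewrite leNgt; apply/negP => non_TP2.
have [Q [Qc tauPQ IQP]] := copula_non_TP2_improvable Pc lt_ii' lt_jj' non_TP2.
have mu_range : 0 <= mu <= ktau Q by rewrite mu0 -tauP.
have [Q' Q'f IQ'Q] := feasible_Ient_le_of_ktau_ge (ltnW n_ge2) Qc mu_range.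
by have := Pmin _ Q'f; rewrite leNgt (le_lt_trans IQ'Q IQP).
Qed.
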